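(* Let $q$ be a prime power, $1\le k$, $k+1<n\le m$, let $g_1,\dots,g_n\in\mathbb{F}_{q^m}$ be linearly independent over $\mathbb{F}_q$, and let $\mathcal{G}$ be the Gabidulin code of dimension $k$ with respect to $g_1,\dots,g_n$. Let $f\in\mathcal{L}_q(x,\mathbb{F}_{q^m})$ be of the form $f(x)=x^{q^{k+1}}-a_1x^{q^k}+\sum_{i=0}^{k-1}c_ix^{q^i}$ with $a_1,c_i\in\mathbb{F}_{q^m}$, and let $\sigma_f=(f(g_1),\dots,f(g_n))$. Then $\sigma_f$ is not a deep hole of $\mathcal{G}$ in the rank metric (i.e. $d_R(\sigma_f,\mathcal{G})\ne n-k$) if and only if there exist $\mathbb{F}_q$-linearly independent elements $\beta_1,\dots,\beta_{k+1}\in\langle g_1,\dots,g_n\rangle$ such that $$a_1=\frac{\det\mathcal{R}_k(\beta_1,\dots,\beta_{k+1})}{\det M_{k+1}(\beta_1,\dots,\beta_{k+1})}.$$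
   Context: For $\beta_1,\dots,\beta_s\in\mathbb{F}_{q^m}$, the $t\times s$ Moore matrix $M_t(\beta_1,\dots,\beta_s)$ has $(i,j)$ entry $\beta_j^{q^{i-1}}$, $1\le i\le t$. $\mathcal{R}_k(\beta_1,\dots,\beta_{k+1})$ is the $(k+1)\times(k+1)$ matrix obtained from $M_{k+2}(\beta_1,\dots,\beta_{k+1})$ by deleting the row $(\beta_1^{q^k},\dots,\beta_{k+1}^{q^k})$. A $q$-linearized polynomial over $\mathbb{F}_{q^m}$ is $L(x)=\sum_{i=0}^{d}a_ix^{q^i}$, $a_i\in\mathbb{F}_{q^m}$, with $q$-degree $d$ if $a_d\neq 0$; $\mathcal{L}_q(x,\mathbb{F}_{q^m})$ is the set of these. Rank distance: $d_R(\mathbf{u},\mathbf{v})=\dim_{\mathbb{F}_q}\langle u_1-v_1,\dots,u_n-v_n\rangle$, $d_R(\mathbf{u},C)=\min_{\mathbf{c}\in C}d_R(\mathbf{u},\mathbf{c})$; a deep hole is a word attaining the covering radius $\max_{\mathbf{u}}d_R(\mathbf{u},C)$, which for $\mathcal{G}$ equals $n-k$. The Gabidulin code of dimension $k$ is $\mathcal{G}=\{(v(g_1),\dots,v(g_n)) : v\in\mathcal{L}_q(x,\mathbb{F}_{q^m}),\ v=0\text{ or }\deg_q(v)<k\}$. *)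

(* F_{q^m} is a finite field L with #|L| = q^m; the subfield
   F_q is {x | x^q = x}. *)
From HB Require Import structures.
From mathcomp Require Import all_boot all_order all_algebra all_field.
Set Implicit Arguments. Unset Strict Implicit. Unset Printing Implicit Defensive.
Import GRing.Theory.
Local Open Scope ring_scope.

Definition prime_power (q : nat) : Prop :=
  exists p e : nat, prime p /\ (0 < e)%N /\ q = (p ^ e)%N.

Section Gab.
Variable L : finFieldType.
Variable q : nat.

Definition Fq_indep (n : nat) (v : 'I_n -> L) : Prop :=
  forall c : 'I_n -> L, (forall i, c i ^+ q = c i) ->
    \sum_(i < n) c i * v i = 0 -> forall i, c i = 0.

Definition in_Fq_span (n : nat) (g : 'I_n -> L) (x : L) : Prop :=
  exists c : 'I_n -> L, (forall i, c i ^+ q = c i) /\ x = \sum_(i < n) c i * g i.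

Definition Fq_indep_on (n : nat) (v : 'I_n -> L) (S : {set 'I_n}) : bool :=
  [forall c : {ffun 'I_n -> L},
     ([forall i, c i ^+ q == c i] && (\sum_(i in S) c i * v i == 0))
       ==> [forall i in S, c i == 0]].

(* dim_{F_q} <v_1,...,v_n> = size of a largest independent subfamily *)
Definition rank_q (n : nat) (v : 'I_n -> L) : nat :=
  \max_(S : {set 'I_n} | Fq_indep_on v S) #|S|.

Definition dR (n : nat) (u v : 'I_n -> L) : nat := rank_q (fun i => u i - v i).

Definition linq_eval (k : nat) (a : 'I_k -> L) (x : L) : L :=
  \sum_(i < k) a i * x ^+ (q ^ i).

Definition gab_word (n k : nat) (g : 'I_n -> L) (a : {ffun 'I_k -> L}) : 'I_n -> L :=
  fun j => linq_eval a (g j).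

Definition dR_code (n k : nat) (g : 'I_n -> L) (u : 'I_n -> L) : nat :=
  \big[minn/n]_(a : {ffun 'I_k -> L}) dR u (gab_word g a).

Definition moore (t s : nat) (b : 'I_s -> L) : 'M[L]_(t, s) :=
  \matrix_(i < t, j < s) b j ^+ (q ^ i).

(* R_k(beta_1..beta_{k+1}): M_{k+2} with the row of exponent q^k removed *)
Definition moreR (k : nat) (b : 'I_k.+1 -> L) : 'M[L]_k.+1 :=
  \matrix_(i < k.+1, j < k.+1) b j ^+ (q ^ (if (i < k)%N then i : nat else k.+1)).

End Gab.

From mathcomp Require Import all_boot all_order all_algebra all_field.
From mathcomp Require Import ring zify.
Set Implicit Arguments. Unset Strict Implicit. Unset Printing Implicit Defensive.
Import GRing.Theory.
Local Open Scope ring_scope.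

(* Write V for the F_q-span of g.  For v of q-degree < k, the rank distance
   from sigma_f to the codeword of v is the rank of the F_q-linear map f - v on
   V, i.e. n minus the dimension of its kernel in V.  Interpolating f by some v
   on k independent vectors of V shows d_R(sigma_f, G) <= n - k, so sigma_f is
   not a deep hole iff some f - v vanishes on k + 1 independent vectors b of V.
   As f - v is monic of q-degree k + 1, its coefficients then solve a linear
   system with matrix M_{k+1}(b), and Cramer's rule gives the coefficient -a1
   of x^{q^k} as -det R_k(b) / det M_{k+1}(b). *)

Section KernelImage.
Variables (U V : finZmodType) (h : U -> V).
Hypothesis hD : {morph h : x y / x + y}.

Lemma card_kernel_image (A : {set U}) :
  (forall x y, x \in A -> y \in A -> x + y \in A) ->
  (forall x, x \in A -> - x \in A) ->
  #|A| = (#|[set x in A | h x == 0%R]| * #|h @: A|)%N.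
Proof.
move=> AD AN.
have h0 : h 0 = 0 by apply: (addrI (h 0)); rewrite -hD !addr0.
have hN x : h (- x) = - h x by apply/eqP; rewrite -addr_eq0 -hD addNr h0.
rewrite -sum1_card (partition_big h (mem (h @: A))) /=; last exact: imset_f.
rewrite mulnC -sum_nat_const; apply: eq_bigr => _ /imsetP [x0 x0A ->].
rewrite sum1dep_card -(card_imset [set x in A | h x == 0%R] (addrI x0)); apply: eq_card => x.
rewrite inE; apply/andP/imsetP => [[xA /eqP hx]|[z]].
  exists (x - x0); last by rewrite addrC subrK.
  by rewrite inE AD ?AN //= hD hN hx subrr.
by rewrite inE => /andP [zA /eqP hz] ->; rewrite AD // hD hz addr0.
Qed.

End KernelImage.

Lemma det_replace_row (R : comPzRingType) n (M : 'M[R]_n) (w r : 'rV[R]_n) k :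
  w *m M = r ->
  \det (\matrix_(i, j) if i == k then r 0 j else M i j) = w 0 k * \det M.
Proof.
move=> <-; rewrite (expand_det_row _ k).
have cofE j : cofactor (\matrix_(i, j) if i == k then (w *m M) 0 j else M i j) k j
    = cofactor M k j.
  rewrite /cofactor; congr (_ * \det _); apply/matrixP => a b.
  by rewrite !mxE eq_sym (negbTE (neq_lift k a)).
under eq_bigr => j _ do rewrite cofE mxE eqxx.
transitivity (\sum_i w 0 i * (M *m \adj M) i k).
  under eq_bigr => j _ do rewrite mxE big_distrl /=.
  rewrite exchange_big /=; apply: eq_bigr => i _; rewrite mxE mulr_sumr.
  by apply: eq_bigr => j _; rewrite [\adj M j k]mxE mulrA.
rewrite mul_mx_adj (bigD1 k) //= big1 => [|i /negbTE ik]; last by rewrite mxE ik mulr0.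
by rewrite mxE eqxx mulr1n addr0.
Qed.

Lemma widen_ord_lift_max t (j : 'I_t) : widen_ord (leqnSn t) j = lift ord_max j.
Proof. by apply: val_inj; rewrite /= /bump leqNgt ltn_ord. Qed.

Lemma bigminn_le (T : finType) (F : T -> nat) N a : (\big[minn/N]_(b : T) F b <= F a)%N.
Proof.
rewrite unlock; have : a \in index_enum T by apply: mem_index_enum.
elim: (index_enum T) => //= b r IH; rewrite inE => /orP [/eqP <-|ar].
  exact: geq_minl.
exact: leq_trans (geq_minr _ _) (IH ar).
Qed.

Lemma bigminn_lt (T : finType) (F : T -> nat) N x : (x <= N)%N ->
  (\big[minn/N]_(b : T) F b < x)%N -> exists a, (F a < x)%N.
Proof.
move=> xN; have [/existsP [a Fa] _ | /existsPn Fx] := boolP [exists a, F a < x]%N.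
  by exists a.
suff : (x <= \big[minn/N]_(b : T) F b)%N by rewrite leqNgt => /negbTE ->.
elim/big_ind: _ => // [u v xu xv|a _]; first by rewrite leq_min xu xv.
by rewrite leqNgt Fx.
Qed.

Section FrobeniusFixedField.
Variables (L : finFieldType) (q : nat).
Hypothesis q_gt1 : (1 < q)%N.
Hypothesis exprqD : forall x y : L, (x + y) ^+ q = x ^+ q + y ^+ q.

Definition Fq : {set L} := [set x | x ^+ q == x].

Lemma mem_Fq x : (x \in Fq) = (x ^+ q == x). Proof. by rewrite inE. Qed.

Lemma Fq0 : (0 : L) \in Fq. Proof. by rewrite mem_Fq expr0n; case: q q_gt1. Qed.
Lemma Fq1 : (1 : L) \in Fq. Proof. by rewrite mem_Fq expr1n. Qed.

Lemma FqD a b : a \in Fq -> b \in Fq -> a + b \in Fq.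
Proof. by rewrite !mem_Fq exprqD => /eqP-> /eqP->. Qed.

Lemma FqN a : a \in Fq -> - a \in Fq.
Proof.
rewrite !mem_Fq => /eqP aq.
have : (a + - a) ^+ q = 0 by rewrite subrr expr0n; case: q q_gt1.
by rewrite exprqD aq addrC => /eqP; rewrite addr_eq0.
Qed.

Lemma FqM a b : a \in Fq -> b \in Fq -> a * b \in Fq.
Proof. by rewrite !mem_Fq exprMn => /eqP-> /eqP->. Qed.

Lemma FqV a : a \in Fq -> a^-1 \in Fq.
Proof. by rewrite !mem_Fq exprVn => /eqP->. Qed.

Lemma exprqXD i (x y : L) : (x + y) ^+ (q ^ i) = x ^+ (q ^ i) + y ^+ (q ^ i).
Proof.
elim: i => [|i IH]; first by rewrite !expn0 !expr1.
by rewrite expnSr !exprM IH exprqD.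
Qed.

Lemma Fq_exprqX a i : a \in Fq -> a ^+ (q ^ i) = a.
Proof.
rewrite mem_Fq => /eqP aq; elim: i => [|i IH]; first by rewrite expn0 expr1.
by rewrite expnSr exprM IH aq.
Qed.

Lemma card_Fq_gt1 : (1 < #|Fq|)%N.
Proof.
have : [set 0; 1] \subset Fq.
  by apply/subsetP => x; rewrite !inE => /orP [] /eqP ->; rewrite -mem_Fq ?Fq0 ?Fq1.
by move/subset_leq_card; rewrite cards2 eq_sym oner_eq0.
Qed.

Definition qlinear (h : L -> L) :=
  {morph h : x y / x + y} /\ forall a x, a \in Fq -> h (a * x) = a * h x.

Lemma qlinear0 h : qlinear h -> h 0 = 0.
Proof. by case=> hD _; apply: (addrI (h 0)); rewrite -hD !addr0. Qed.

Lemma qlinear_sum h s (c v : 'I_s -> L) : qlinear h ->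
  (forall i, c i \in Fq) -> h (\sum_i c i * v i) = \sum_i c i * h (v i).
Proof.
move=> hl Fc; rewrite (big_morph h hl.1 (qlinear0 hl)).
by apply: eq_bigr => i _; rewrite hl.2.
Qed.

Lemma qlinearD h1 h2 : qlinear h1 -> qlinear h2 -> qlinear (fun x => h1 x + h2 x).
Proof.
case=> D1 Z1 [D2 Z2]; split=> [x y|a x Fa]; first by rewrite D1 D2 addrACA.
by rewrite Z1 // Z2 // mulrDr.
Qed.

Lemma qlinearB h1 h2 : qlinear h1 -> qlinear h2 -> qlinear (fun x => h1 x - h2 x).
Proof.
case=> D1 Z1 [D2 Z2]; split=> [x y|a x Fa]; first by rewrite D1 D2 opprD addrACA.
by rewrite Z1 // Z2 // mulrBr.
Qed.

Lemma qlinear_linq_eval s (w : 'I_s -> L) : qlinear (linq_eval q w).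
Proof.
split=> [x y|a x Fa]; rewrite /linq_eval.
  by rewrite -big_split; apply: eq_bigr => i _; rewrite exprqXD mulrDr.
by rewrite mulr_sumr; apply: eq_bigr => i _; rewrite exprMn Fq_exprqX // mulrCA.
Qed.

Lemma qlinear_exprqX i : qlinear (fun x => x ^+ (q ^ i)).
Proof.
by split=> [x y|a x Fa]; rewrite ?exprqXD // exprMn Fq_exprqX.
Qed.

Lemma qlinearZ b h : qlinear h -> qlinear (fun x => b * h x).
Proof.
case=> D Z; split=> [x y|a x Fa]; first by rewrite D mulrDr.
by rewrite Z // mulrCA.
Qed.

Definition Fq_coefs s (S : {set 'I_s}) :=
  [set c : {ffun 'I_s -> L} | [forall i, c i \in Fq] && [forall i, (i \notin S) ==> (c i == 0)]].

Definition comb s (v : 'I_s -> L) (c : {ffun 'I_s -> L}) := \sum_i c i * v i.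
Definition span_on s (v : 'I_s -> L) (S : {set 'I_s}) := [set comb v c | c in Fq_coefs S].
Definition span s (v : 'I_s -> L) := span_on v setT.

Lemma Fq_coefsP s (S : {set 'I_s}) (c : {ffun 'I_s -> L}) :
  reflect ((forall i, c i \in Fq) /\ (forall i, i \notin S -> c i = 0)) (c \in Fq_coefs S).
Proof.
rewrite inE; apply: (iffP andP) => [[/forallP Fc /forallP cS]|[Fc cS]].
  by split=> // i iS; apply/eqP; exact: (implyP (cS i) iS).
by split; apply/forallP => i //; apply/implyP => iS; rewrite cS.
Qed.

Lemma card_Fq_coefs s (S : {set 'I_s}) : #|Fq_coefs S| = (#|Fq| ^ #|S|)%N.
Proof.
rewrite -(card_pffun_on 0); apply: eq_card => c; apply/Fq_coefsP/pffun_onP.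
  case=> Fc cS; split; first by apply/supportP.
  by move=> _ /imageP [x _ ->].
case=> /supportP cS Fc; split=> // i.
by have [iS|/cS ->] := boolP (i \in S); [apply: Fc; apply: image_f | exact: Fq0].
Qed.

Lemma comb_on s (v : 'I_s -> L) (S : {set 'I_s}) (c : {ffun 'I_s -> L}) :
  c \in Fq_coefs S -> comb v c = \sum_(i in S) c i * v i.
Proof.
case/Fq_coefsP => _ cS; rewrite /comb [RHS]big_mkcond; apply: eq_bigr => i _.
by case: ifP => // /negbT /cS ->; rewrite mul0r.
Qed.

Section Span.
Variables (s : nat) (v : 'I_s -> L) (S : {set 'I_s}).

Lemma span_onP x :
  reflect (exists2 c, c \in Fq_coefs S & x = comb v c) (x \in span_on v S).
Proof. exact: imsetP. Qed.

Lemma span_on0 : 0 \in span_on v S.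
Proof.
apply/span_onP; exists [ffun => 0].
  by apply/Fq_coefsP; split=> i; rewrite ffunE // Fq0.
by rewrite /comb big1 // => i _; rewrite ffunE mul0r.
Qed.

Lemma span_onD x y : x \in span_on v S -> y \in span_on v S -> x + y \in span_on v S.
Proof.
case/span_onP => c /Fq_coefsP [Fc cS] -> /span_onP [d /Fq_coefsP [Fd dS] ->].
apply/span_onP; exists [ffun i => c i + d i].
  by apply/Fq_coefsP; split=> i; rewrite ffunE ?FqD // => iS; rewrite cS ?dS ?addr0.
by rewrite /comb -big_split; apply: eq_bigr => i _; rewrite ffunE mulrDl.
Qed.

Lemma span_onZ a x : a \in Fq -> x \in span_on v S -> a * x \in span_on v S.
Proof.
move=> Fa /span_onP [c /Fq_coefsP [Fc cS] ->].
apply/span_onP; exists [ffun i => a * c i].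
  by apply/Fq_coefsP; split=> i; rewrite ffunE ?FqM // => iS; rewrite cS ?mulr0.
by rewrite /comb mulr_sumr; apply: eq_bigr => i _; rewrite ffunE mulrA.
Qed.

Lemma span_onN x : x \in span_on v S -> - x \in span_on v S.
Proof. by rewrite -mulN1r; apply: span_onZ; rewrite FqN ?Fq1. Qed.

Lemma span_on_sum t (c u : 'I_t -> L) :
  (forall i, c i \in Fq) -> (forall i, u i \in span_on v S) ->
  \sum_i c i * u i \in span_on v S.
Proof.
move=> Fc Su; elim/big_ind: _ => [|x y|i _]; [exact: span_on0 | exact: span_onD |].
exact: span_onZ.
Qed.

Lemma mem_span_on i : i \in S -> v i \in span_on v S.
Proof.
move=> iS; apply/span_onP; exists [ffun j => (j == i)%:R].
  apply/Fq_coefsP; split=> j; rewrite ffunE; first by case: eqP; rewrite ?Fq1 ?Fq0.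
  by case: eqP => // ->; rewrite iS.
rewrite /comb (bigD1 i) //= big1 ?addr0 => [|j /negPf ji]; rewrite ffunE ?ji ?mul0r //.
by rewrite eqxx mul1r.
Qed.

End Span.

Lemma Fq_indep_onP s (v : 'I_s -> L) (S : {set 'I_s}) :
  reflect (forall c : {ffun 'I_s -> L}, (forall i, c i \in Fq) ->
            \sum_(i in S) c i * v i = 0 -> forall i, i \in S -> c i = 0)
          (Fq_indep_on q v S).
Proof.
apply: (iffP forallP) => [H c Fc cv0 i iS | H c].
  move/implyP: (H c); rewrite cv0 eqxx andbT.
  have -> : [forall i, c i ^+ q == c i] by apply/forallP => j; rewrite -mem_Fq.
  by move/(_ isT)/forall_inP/(_ i iS)/eqP.
apply/implyP => /andP [/forallP Fc /eqP cv0]; apply/forall_inP => i iS.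
by apply/eqP; apply: H iS => // j; rewrite mem_Fq.
Qed.

Lemma Fq_indep_onT s (v : 'I_s -> L) : Fq_indep q v -> Fq_indep_on q v setT.
Proof.
move=> vI; apply/Fq_indep_onP => c Fc cv0 i _; apply: (vI c) => [j|].
  by apply/eqP; rewrite -mem_Fq.
by rewrite -[RHS]cv0; apply: eq_bigl => j; rewrite inE.
Qed.

Lemma card_span_on_le s (v : 'I_s -> L) (S : {set 'I_s}) :
  (#|span_on v S| <= #|Fq| ^ #|S|)%N.
Proof. by rewrite -card_Fq_coefs; apply: leq_imset_card. Qed.

Lemma card_span_ge_indep_on s (v : 'I_s -> L) (S : {set 'I_s}) :
  Fq_indep_on q v S -> (#|Fq| ^ #|S| <= #|span v|)%N.
Proof.
move/Fq_indep_onP => vI; rewrite -card_Fq_coefs.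
have <- : #|span_on v S| = #|Fq_coefs S|.
  apply: card_in_imset => c d cS dS cd; apply/ffunP => i.
  case/Fq_coefsP: (cS) => Fc c0; case/Fq_coefsP: (dS) => Fd d0.
  have [iS|/[dup]/c0->/d0->//] := boolP (i \in S); apply/eqP; rewrite -subr_eq0.
  have := vI [ffun i => c i - d i] _ _ i iS; rewrite ffunE => -> //.
    by move=> j; rewrite ffunE FqD ?FqN.
  under eq_bigr => j _ do rewrite ffunE mulrBl.
  by rewrite sumrB -(comb_on v cS) -(comb_on v dS) cd subrr.
apply/subset_leq_card/subsetP => _ /imsetP [c /Fq_coefsP [Fc _] ->].
by apply/imsetP; exists c => //; apply/Fq_coefsP; split=> // i; rewrite inE.
Qed.

Lemma card_span s (v : 'I_s -> L) : Fq_indep q v -> #|span v| = (#|Fq| ^ s)%N.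
Proof.
move=> /Fq_indep_onT /card_span_ge_indep_on vI; apply/eqP; rewrite eqn_leq.
by move: vI (card_span_on_le v setT); rewrite cardsT card_ord => -> ->.
Qed.

Lemma span_in_Fq_span s (v : 'I_s -> L) x : x \in span v <-> in_Fq_span q v x.
Proof.
split=> [/span_onP [c /Fq_coefsP [Fc _] ->]|[c [Fc ->]]].
  by exists c; split=> // i; apply/eqP; rewrite -mem_Fq.
apply/span_onP; exists [ffun i => c i].
  by apply/Fq_coefsP; split=> i; [rewrite ffunE mem_Fq Fc | rewrite inE].
by rewrite /comb; apply: eq_bigr => i _; rewrite ffunE.
Qed.

Lemma span_subset s (v : 'I_s -> L) t (b : 'I_t -> L) :
  (forall i, b i \in span v) -> span b \subset span v.
Proof.
by move=> bv; apply/subsetP => _ /span_onP [c /Fq_coefsP [Fc _] ->]; apply: span_on_sum.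
Qed.

Lemma span_qlinear_image s (v : 'I_s -> L) h :
  qlinear h -> span (fun i => h (v i)) = h @: span v.
Proof.
move=> hl; apply/setP => x; apply/span_onP/imsetP => [[c cT ->]|[_ /span_onP [c cT ->] ->]].
  by exists (comb v c); [apply/imsetP; exists c | case/Fq_coefsP: cT => Fc _; rewrite /comb qlinear_sum].
by exists c => //; case/Fq_coefsP: cT => Fc _; rewrite /comb qlinear_sum.
Qed.

Lemma mem_span_on_dependent s (u : 'I_s -> L) (S : {set 'I_s}) j :
  Fq_indep_on q u S -> ~~ Fq_indep_on q u (j |: S) -> u j \in span_on u S.
Proof.
move=> uIS; have [jS _|jS] := boolP (j \in S); first exact: mem_span_on.
case/forallPn => d; rewrite negb_imply => /andP [/andP [/forallP Fd /eqP dv0]].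
case/forall_inPn => i iSj di; have {}Fd i' : d i' \in Fq by rewrite mem_Fq Fd.
rewrite big_setU1 //= in dv0.
have [dj0|dj] := eqVneq (d j) 0.
  rewrite dj0 mul0r add0r in dv0; move: iSj di; rewrite !inE.
  case/orP => [/eqP->|iS]; first by rewrite dj0 eqxx.
  by rewrite (Fq_indep_onP _ _ uIS d Fd dv0 i iS) eqxx.
have -> : u j = - (d j)^-1 * \sum_(i in S) d i * u i.
  have dju : d j * u j = - \sum_(i in S) d i * u i by apply/eqP; rewrite -addr_eq0 dv0.
  by rewrite mulNr -mulrN -dju mulKf.
rewrite span_onZ ?FqN ?FqV //.
by elim/big_ind: _ => [|x y|i1 i1S]; [exact: span_on0 | exact: span_onD | rewrite span_onZ ?mem_span_on].
Qed.

(* A maximal independent subfamily of u already spans every u j. *)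
Lemma card_span_le_rank s (u : 'I_s -> L) : (#|span u| <= #|Fq| ^ rank_q q u)%N.
Proof.
have uI0 : Fq_indep_on q u set0 by apply/Fq_indep_onP => c _ _ i; rewrite inE.
have [S uIS rankE] := @eq_bigmax_cond _ (fun S => Fq_indep_on q u S)
  (fun S : {set 'I_s} => #|S|) (ltac:(by apply/card_gt0P; exists set0)).
rewrite /rank_q rankE; apply: leq_trans (card_span_on_le u S).
apply/subset_leq_card/subsetP => _ /span_onP [c /Fq_coefsP [Fc _] ->].
apply: span_on_sum => // j; have [jS|jS] := boolP (j \in S); first exact: mem_span_on.
apply: mem_span_on_dependent uIS _; apply/negP.
move/(@leq_bigmax_cond _ (fun S => Fq_indep_on q u S) (fun S => #|S|)).
by rewrite rankE cardsU1 jS ltnn.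
Qed.

Lemma exists_Fq_indep_of_card (K : {set L}) t :
  0 \in K -> (forall x y, x \in K -> y \in K -> x + y \in K) ->
  (forall a x, a \in Fq -> x \in K -> a * x \in K) ->
  (#|Fq| ^ t <= #|K|)%N ->
  exists b : 'I_t -> L, Fq_indep q b /\ forall i, b i \in K.
Proof.
move=> K0 KD KZ; elim: t => [|t IH] cardK.
  by exists (fun _ => 0); split=> [c _ _ []|[]].
have [b [bI bK]] : exists b : 'I_t -> L, Fq_indep q b /\ forall i, b i \in K.
  by apply: IH; apply: leq_trans cardK; rewrite leq_exp2l ?card_Fq_gt1.
have : ~~ (K \subset span b).
  apply/negP => /subset_leq_card; rewrite card_span //.
  by move/(leq_trans cardK); rewrite leq_exp2l ?card_Fq_gt1 // ltnn.
case/subsetPn => x xK xb.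
pose b' (i : 'I_t.+1) := if unlift ord_max i is Some j then b j else x.
exists b'; split=> [c Fc|i]; last by rewrite /b'; case: unlift.
rewrite big_ord_recr /= /b' unlift_none.
under eq_bigr => i _ do rewrite widen_ord_lift_max liftK.
move=> cb0; have Fc' i : c i \in Fq by rewrite mem_Fq Fc.
have cmax : c ord_max = 0.
  apply/eqP; apply: contraNT xb => cm.
  have -> : x = - (c ord_max)^-1 * \sum_(i < t) c (lift ord_max i) * b i.
    have cx : c ord_max * x = - \sum_(i < t) c (lift ord_max i) * b i.
      by apply/eqP; rewrite -addr_eq0 addrC cb0.
    by rewrite mulNr -mulrN -cx mulKf.
  rewrite span_onZ ?FqN ?FqV // span_on_sum // => i.
  by rewrite mem_span_on ?inE.
rewrite cmax mul0r addr0 in cb0; have := bI _ (fun i => Fc _) cb0.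
by move=> cb i; case: (unliftP ord_max i) => [j ->|->].
Qed.

Section KernelOnSpan.
Variables (h : L -> L) (n : nat) (g : 'I_n -> L).
Hypotheses (h_qlinear : qlinear h) (g_indep : Fq_indep q g).

Let ker := [set x in span g | h x == 0%R].

Lemma card_span_kernel_image : #|span g| = (#|ker| * #|h @: span g|)%N.
Proof. by rewrite /ker (card_kernel_image h_qlinear.1 (@span_onD _ g _) (@span_onN _ g _)). Qed.

Lemma rank_comp_add_kernel_le t (b : 'I_t -> L) :
  Fq_indep q b -> (forall i, b i \in span g) -> (forall i, h (b i) = 0) ->
  (rank_q q (fun j => h (g j)) + t <= n)%N.
Proof.
move=> bI bg hb; have cardE := card_span_kernel_image.
rewrite card_span // in cardE.
have ker_ge : (#|Fq| ^ t <= #|ker|)%N.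
  rewrite -(card_span bI); apply/subset_leq_card/subsetP => x xb.
  rewrite inE (subsetP (span_subset bg)) //=.
  case/span_onP: xb => c /Fq_coefsP [Fc _] ->; rewrite /comb qlinear_sum //.
  by rewrite big1 // => i _; rewrite hb mulr0.
have indep_le S : Fq_indep_on q (fun j => h (g j)) S -> (#|S| + t <= n)%N.
  move/card_span_ge_indep_on; rewrite span_qlinear_image // => imS.
  by rewrite -(leq_exp2l _ _ card_Fq_gt1) expnD mulnC cardE leq_mul.
have tn : (t <= n)%N.
  by have := indep_le set0; rewrite cards0; apply; apply/Fq_indep_onP => c _ _ i; rewrite inE.
rewrite addnC -leq_subRL //; apply/bigmax_leqP => S /indep_le.
by rewrite addnC leq_subRL.
Qed.

Lemma card_span_le_kernel_rank :
  (#|Fq| ^ n <= #|ker| * #|Fq| ^ rank_q q (fun j => h (g j)))%N.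
Proof.
rewrite -(card_span g_indep) card_span_kernel_image leq_mul2l -span_qlinear_image //.
by rewrite card_span_le_rank orbT.
Qed.

Lemma exists_Fq_indep_kernel t : (rank_q q (fun j => h (g j)) + t <= n)%N ->
  exists b : 'I_t -> L, [/\ Fq_indep q b, forall i, b i \in span g & forall i, h (b i) = 0].
Proof.
move=> rank_le; have [hD hZ] := h_qlinear; have h0 := qlinear0 h_qlinear.
have cardK : (#|Fq| ^ t <= #|ker|)%N.
  have rank_gt0 : (0 < #|Fq| ^ rank_q q (fun j => h (g j)))%N.
    by rewrite expn_gt0 (ltnW card_Fq_gt1).
  rewrite -(leq_pmul2r rank_gt0); apply: leq_trans card_span_le_kernel_rank.
  by rewrite -expnD leq_exp2l ?card_Fq_gt1 // addnC.
have [b [bI bK]] : exists b : 'I_t -> L, Fq_indep q b /\ forall i, b i \in ker.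
  apply: exists_Fq_indep_of_card cardK => [|x y|a x Fa]; rewrite !inE.
  - by rewrite span_on0 h0 eqxx.
  - by case/andP => xg /eqP hx /andP [yg /eqP hy]; rewrite span_onD //= hD hx hy addr0.
  - by case/andP => xg /eqP hx; rewrite span_onZ //= hZ // hx mulr0.
by exists b; split=> // i; have := bK i; rewrite inE => /andP [? /eqP].
Qed.

End KernelOnSpan.

Lemma card_linq_roots_le s (w : 'I_s -> L) i0 : w i0 != 0 ->
  (#|[set x | linq_eval q w x == 0%R]| <= q ^ s.-1)%N.
Proof.
move=> wi0; pose p : {poly L} := \sum_(i < s) w i *: 'X^(q ^ i).
have pE x : p.[x] = linq_eval q w x.
  by rewrite /p horner_sum; apply: eq_bigr => i _; rewrite hornerZ hornerXn.
have p_neq0 : p != 0.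
  apply/negP => /eqP /(congr1 (fun p : {poly L} => p`_(q ^ i0))).
  rewrite coef0 /p coef_sum (bigD1 i0) //= big1 => [|i ii0].
    by rewrite coefZ coefXn eqxx mulr1 addr0; apply/eqP.
  rewrite coefZ coefXn; case: eqP => [/(expnI q_gt1) /val_inj E|_]; last by rewrite mulr0.
  by rewrite E eqxx in ii0.
have size_p : (size p <= (q ^ s.-1).+1)%N.
  apply: leq_trans (size_sum _ _ _) _; apply/bigmax_leqP => i _.
  apply: leq_trans (size_scale_leq _ _) _; rewrite size_polyXn ltnS.
  by rewrite leq_pexp2l ?(ltnW q_gt1) // -ltnS (ltn_predK (ltn_ord i)).
have roots_lt : (#|[set x | linq_eval q w x == 0%R]| < size p)%N.
  rewrite cardE; apply: (max_poly_roots p_neq0); last exact: enum_uniq.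
  by apply/allP => x; rewrite mem_enum inE /root pE.
by rewrite -ltnS (leq_trans roots_lt).
Qed.

Lemma card_Fq_le : (#|Fq| <= q)%N.
Proof.
pose w (i : 'I_2) : L := if i == ord0 then -1 else 1.
have -> : Fq = [set x | linq_eval q w x == 0%R].
  apply/setP => x; rewrite !inE /linq_eval !big_ord_recl big_ord0 /w /=.
  by rewrite expn0 expn1 expr1 mulN1r mul1r addr0 addrC subr_eq0.
by apply: (@card_linq_roots_le 2 w ord0); rewrite /w eqxx oppr_eq0 oner_eq0.
Qed.

Lemma trace_in_Fq m x : #|L| = (q ^ m)%N -> linq_eval q (fun _ : 'I_m => 1) x \in Fq.
Proof.
move=> cardL; rewrite mem_Fq.
have -> : linq_eval q (fun _ : 'I_m => 1) x ^+ q = \sum_(i < m) x ^+ (q ^ i.+1).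
  have zero_q : 0 ^+ q = 0 :> L by rewrite expr0n; case: q q_gt1.
  rewrite (big_morph (fun y => y ^+ q) exprqD zero_q).
  by apply: eq_bigr => i _; rewrite !mul1r expnS mulnC exprM.
case: m cardL => [|m cardL]; first by rewrite /linq_eval !big_ord0 eqxx.
rewrite /linq_eval big_ord_recr big_ord_recl /= -cardL expf_card.
rewrite expn0 expr1 mul1r addrC; apply/eqP; congr (_ + _).
by apply: eq_bigr => i _; rewrite mul1r.
Qed.

(* The trace maps L into F_q, and its kernel has at most q^(m-1) elements. *)
Lemma card_Fq m : (0 < m)%N -> #|L| = (q ^ m)%N -> #|Fq| = q.
Proof.
move=> m_gt0 cardL; apply/eqP; rewrite eqn_leq card_Fq_le /=.
pose tr := linq_eval q (fun _ : 'I_m => (1 : L)).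
have := card_kernel_image (qlinear_linq_eval (fun _ : 'I_m => 1)).1
  (fun _ _ _ _ => in_setT _) (fun _ _ => in_setT _).
rewrite cardsT cardL -/tr => cardE.
have ker_le : (#|[set x in setT | tr x == 0%R]| <= q ^ m.-1)%N.
  apply: leq_trans (@card_linq_roots_le m (fun _ => 1) (Ordinal m_gt0) (oner_neq0 _)).
  by apply/subset_leq_card/subsetP => x; rewrite !inE.
have im_Fq : tr @: setT \subset Fq.
  by apply/subsetP => _ /imsetP [x _ ->]; apply: trace_in_Fq cardL.
have qm_gt0 : (0 < q ^ m.-1)%N by rewrite expn_gt0 (ltnW q_gt1).
rewrite -(leq_pmul2r qm_gt0) -expnS prednK // cardE mulnC.
by rewrite leq_mul // (subset_leq_card im_Fq).
Qed.

Lemma linq_evalB s (u w : 'I_s -> L) x :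
  linq_eval q (fun i => u i - w i) x = linq_eval q u x - linq_eval q w x.
Proof. by rewrite /linq_eval -sumrB; apply: eq_bigr => i _; rewrite mulrBl. Qed.

Lemma linq_eval_ffun s (w : 'I_s -> L) x : linq_eval q [ffun i => w i] x = linq_eval q w x.
Proof. by apply: eq_bigr => i _; rewrite ffunE. Qed.

Lemma linq_eval_recr k (w : 'I_k.+1 -> L) x :
  linq_eval q w x = linq_eval q (fun i : 'I_k => w (widen_ord (leqnSn k) i)) x
                    + w ord_max * x ^+ (q ^ k).
Proof. by rewrite /linq_eval big_ord_recr. Qed.

Section Moore.
Hypothesis card_Fq_eq : #|Fq| = q.

(* A nonzero v with v M_s(b) = 0 gives a q-polynomial of q-degree < s
   vanishing on the q^s elements of the span of b. *)
Lemma moore_det_neq0 s (b : 'I_s -> L) : Fq_indep q b -> \det (moore q s b) != 0.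
Proof.
move=> bI; apply/negP => /det0P [v v_neq0 vM0].
have [i0 vi0] : exists i, v 0 i != 0.
  apply/existsP; apply: contraNT v_neq0 => /existsPn v0; apply/eqP/rowP => j.
  by move: (v0 j); rewrite negbK mxE => /eqP ->.
have root_b j : linq_eval q (fun i => v 0 i) (b j) = 0.
  have := congr1 (fun M : 'rV[L]_s => M 0 j) vM0; rewrite !mxE => <-.
  by apply: eq_bigr => i _; rewrite mxE.
have span_roots : span b \subset [set x | linq_eval q (fun i => v 0 i) x == 0%R].
  apply/subsetP => _ /span_onP [c /Fq_coefsP [Fc _] ->]; rewrite inE /comb.
  rewrite qlinear_sum //; last exact: qlinear_linq_eval.
  by rewrite big1 // => i _; rewrite root_b mulr0.
have := leq_trans (subset_leq_card span_roots) (card_linq_roots_le vi0).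
rewrite card_span // card_Fq_eq leq_exp2l // leqNgt ltn_predL.
by rewrite (leq_ltn_trans (leq0n i0) (ltn_ord i0)).
Qed.

Lemma linq_eval_interpolation s (b r : 'I_s -> L) : Fq_indep q b ->
  exists w : 'I_s -> L, forall j, linq_eval q w (b j) = r j.
Proof.
move=> bI; have Mu : moore q s b \in unitmx by rewrite unitmxE unitfE moore_det_neq0.
pose u := (\row_j r j) *m invmx (moore q s b).
exists (fun i => u 0 i) => j.
have := congr1 (fun M : 'rV[L]_s => M 0 j) (mulmxKV Mu (\row_j r j)); rewrite /= !mxE => <-.
by apply: eq_bigr => i _; rewrite [moore q s b i j]mxE.
Qed.

(* Cramer's rule for the coefficient vector (-d, e) of the monic annihilator,
   whose Moore system has right-hand side the row (b_j^(q^(k+1)))_j. *)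
Lemma moreR_moore_ratio k (b : 'I_k.+1 -> L) (d : 'I_k -> L) e : Fq_indep q b ->
  (forall j, b j ^+ (q ^ k.+1) - e * b j ^+ (q ^ k) + linq_eval q d (b j) = 0) ->
  e = \det (moreR q b) / \det (moore q k.+1 b).
Proof.
move=> bI bd0.
pose w := \row_i if unlift ord_max i is Some j then - d j else e.
have wM : w *m moore q k.+1 b = \row_j b j ^+ (q ^ k.+1).
  have w_widen i : w 0 (widen_ord (leqnSn k) i) = - d i.
    by rewrite mxE widen_ord_lift_max liftK.
  apply/matrixP => i j; rewrite ord1 !mxE big_ord_recr /=.
  under eq_bigr => l _ do rewrite w_widen mulNr mxE.
  have bq : b j ^+ (q ^ k.+1) = e * b j ^+ (q ^ k) - linq_eval q d (b j).
    by rewrite -[LHS]subr0 -(bd0 j); ring.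
  by rewrite sumrN !mxE unlift_none bq addrC.
have replE := det_replace_row ord_max wM; rewrite mxE unlift_none in replE.
suff -> : moreR q b = \matrix_(i, j) if i == ord_max then (\row_j b j ^+ (q ^ k.+1)) 0 j
                                     else moore q k.+1 b i j.
  by rewrite replE mulfK ?moore_det_neq0.
apply/matrixP => i j; rewrite /moreR /moore !mxE; case: ltnP => ik.
  by rewrite ifF //; apply/negbTE; rewrite -(inj_eq val_inj) /= neq_ltn ik.
by rewrite ifT //; apply/eqP/val_inj/eqP; rewrite eqn_leq ik -ltnS ltn_ord.
Qed.

Lemma linq_annihilator_iff_moore_ratio k (b : 'I_k.+1 -> L) a1 (c : 'I_k -> L) :
  Fq_indep q b ->
  (exists a : 'I_k -> L, forall j,
     b j ^+ (q ^ k.+1) - a1 * b j ^+ (q ^ k) + linq_eval q c (b j) = linq_eval q a (b j))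
  <-> a1 = \det (moreR q b) / \det (moore q k.+1 b).
Proof.
move=> bI; split=> [[a fab]|a1E].
  apply: (moreR_moore_ratio (d := fun i => c i - a i)) => // j.
  by rewrite linq_evalB addrA fab subrr.
have [w wb] := linq_eval_interpolation (fun j => - b j ^+ (q ^ k.+1)) bI.
pose d i := w (widen_ord (leqnSn k) i).
have wd0 j : b j ^+ (q ^ k.+1) - (- w ord_max) * b j ^+ (q ^ k) + linq_eval q d (b j) = 0.
  by rewrite mulNr opprK -addrA [w ord_max * _ + _]addrC -linq_eval_recr wb subrr.
have a1w : a1 = - w ord_max by rewrite a1E -(moreR_moore_ratio bI wd0).
exists (fun i => c i - d i) => j; rewrite linq_evalB -[RHS]addr0 -(wd0 j) a1w; ring.
Qed.

Section CoveringRadius.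
Variables (n k : nat) (g : 'I_n -> L) (f : L -> L).
Hypotheses (g_indep : Fq_indep q g) (f_qlinear : qlinear f).

Lemma dR_gab_word (a : {ffun 'I_k -> L}) :
  dR q (fun j => f (g j)) (gab_word q g a) = rank_q q (fun j => f (g j) - linq_eval q a (g j)).
Proof. by []. Qed.

Lemma dR_code_le : (k <= n)%N -> (dR_code q k g (fun j => f (g j)) <= n - k)%N.
Proof.
move=> kn; have span_ge : (#|Fq| ^ k <= #|span g|)%N.
  by rewrite card_span // leq_exp2l ?card_Fq_gt1.
have [b [bI bg]] := exists_Fq_indep_of_card (span_on0 g setT)
  (@span_onD _ g _) (@span_onZ _ g _) span_ge.
have [w fwb] := linq_eval_interpolation (fun j => f (b j)) bI.
have hl := qlinearB f_qlinear (qlinear_linq_eval [ffun i => w i]).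
have rank_le : (dR q (fun j => f (g j)) (gab_word q g [ffun i => w i]) + k <= n)%N.
  rewrite dR_gab_word; apply: (rank_comp_add_kernel_le hl g_indep bI bg) => j.
  by rewrite linq_eval_ffun fwb subrr.
by apply: leq_trans (bigminn_le _ n [ffun i => w i]) _; lia.
Qed.

Lemma dR_code_lt_iff : (k < n)%N ->
  (dR_code q k g (fun j => f (g j)) < n - k)%N <->
  exists (a : 'I_k -> L) (b : 'I_k.+1 -> L),
    [/\ Fq_indep q b, forall i, b i \in span g & forall i, f (b i) = linq_eval q a (b i)].
Proof.
move=> kn; split=> [|[a [b [bI bg fab]]]].
  case/(bigminn_lt (leq_subr k n)) => a; rewrite dR_gab_word => rank_lt.
  have hl := qlinearB f_qlinear (qlinear_linq_eval a).
  have [|b [bI bg hb]] := exists_Fq_indep_kernel hl g_indep (t := k.+1); first by rewrite addnS addnC -ltn_subRL.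
  by exists a, b; split=> // i; apply/eqP; rewrite -subr_eq0 hb.
have hl := qlinearB f_qlinear (qlinear_linq_eval [ffun i => a i]).
have rank_le : (dR q (fun j => f (g j)) (gab_word q g [ffun i => a i]) + k.+1 <= n)%N.
  rewrite dR_gab_word; apply: (rank_comp_add_kernel_le hl g_indep bI bg) => i.
  by rewrite linq_eval_ffun fab subrr.
by apply: leq_ltn_trans (bigminn_le _ n [ffun i => a i]) _; lia.
Qed.

End CoveringRadius.

End Moore.

End FrobeniusFixedField.

Lemma prime_power_gt1 q : prime_power q -> (1 < q)%N.
Proof.
by move=> [p [e [p_prime [e_gt0 ->]]]]; rewrite -[1%N](expn0 p) ltn_exp2l ?prime_gt1.
Qed.

Lemma prime_power_exprD (L : finFieldType) q m :
  prime_power q -> #|L| = (q ^ m)%N -> forall x y : L, (x + y) ^+ q = x ^+ q + y ^+ q.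
Proof.
move=> [p [e [p_prime [_ qE]]]] cardL x y.
have pL : p \in [pchar L] by apply: (@card_finPcharP _ _ (e * m)); rewrite // cardL qE expnM.
by apply: exprDn_pchar; rewrite (eq_pnat _ (pcharf_eq pL)) qE pnatX pnat_id.
Qed.

Theorem lemma3 (L : finFieldType) (q m n k : nat) (g : 'I_n -> L)
    (a1 : L) (c : 'I_k -> L) :
  prime_power q -> #|L| = (q ^ m)%N ->
  (1 <= k)%N -> (k.+1 < n)%N -> (n <= m)%N ->
  Fq_indep q g ->
  let f := fun x : L => x ^+ (q ^ k.+1) - a1 * x ^+ (q ^ k) + linq_eval q c x in
  let sigma_f := fun j : 'I_n => f (g j) in
  (dR_code q k g sigma_f <> (n - k)%N) <->
  exists b : 'I_k.+1 -> L,
    [/\ Fq_indep q b, (forall i, in_Fq_span q g (b i)) &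
        a1 = \det (moreR q b) / \det (moore q k.+1 b)].
Proof.
move=> qP cardL _ kn nm g_indep f sigma_f.
have q_gt1 := prime_power_gt1 qP; have exprqD := prime_power_exprD qP cardL.
have card_Fq_eq : #|Fq L q| = q by apply: card_Fq q_gt1 exprqD _ _ cardL; lia.
have f_qlinear : qlinear q f.
  apply: qlinearD (qlinear_linq_eval exprqD c); apply: qlinearB; last apply: qlinearZ;
  exact: qlinear_exprqX.
have lt_iff := dR_code_lt_iff q_gt1 exprqD card_Fq_eq g_indep f_qlinear (ltnW kn).
have d_le := dR_code_le q_gt1 exprqD card_Fq_eq g_indep f_qlinear (ltnW (ltnW kn)).
have ratio_iff b := linq_annihilator_iff_moore_ratio q_gt1 exprqD card_Fq_eq (b := b) a1 c.
split=> [/eqP d_neq | [b [bI bg a1E]]].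
  have [|a [b [bI bg fab]]] := lt_iff.1; first by rewrite ltn_neqAle d_neq.
  exists b; split=> // [i|]; first exact/span_in_Fq_span.
  by apply/(ratio_iff b bI); exists a.
have [a fab] := (ratio_iff b bI).2 a1E.
have : (dR_code q k g sigma_f < n - k)%N.
  by apply/lt_iff; exists a, b; split=> // i; apply/span_in_Fq_span.
by move=> + d_eq; rewrite d_eq ltnn.
Qed.
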